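(* Let $B=\bigoplus_{i\in\mathbb{Z}}\mathbb{Z}_2$ and $L_2=B\rtimes\langle t\rangle$ the lamplighter group, equipped with the word metric for the generating set $\{t,at\}$ (whose Cayley graph is the Diestel–Leader graph $DL(2,2)$). Let $\Psi:L_2\to L_2$ be a $(1,0)$-quasi-isometry (i.e. an isometry) that coarsely permutes the left cosets of $\langle t\rangle$, with induced permutation $\psi:B\to B$. Then $\psi$ is parallelogram preserving: for all $a,b,c,d\in B$ with $a+c=b+d$ we have $\psi(a)+\psi(c)=\psi(b)+\psi(d)$.
   Context: Elements of $L_2$ are $((x_i),k)$ with $((x_i),k)((y_i),\ell)=((x_i+y_{i-k}),k+\ell)$, $t=(0,1)$, $at=(e_0,1)$ where $e_0$ has a single $1$ at index $0$. $\Psi$ coarsely permutes the left cosets of $\langle t\rangle$ if there are a permutation $\sigma$ of these cosets and $C'\ge0$ with Hausdorff distance $d_{\mathcal H}(\Psi(g\langle t\rangle),\sigma(g\langle t\rangle))<C'$ for all $g$; identifying the coset $((x_i),k)\langle t\rangle$ with $(x_i)\in B$ gives $\psi$. *)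

From HB Require Import structures.
From mathcomp Require Import all_boot all_order all_algebra.
From mathcomp Require Import finmap.
Set Implicit Arguments. Unset Strict Implicit. Unset Printing Implicit Defensive.
Import GRing.Theory.
Local Open Scope fset_scope.

(* B = (+)_{i in Z} Z_2, represented by the (finite) set of indices where the
   entry is 1.  Addition in B is symmetric difference. *)
Definition B := {fset int}.
Definition Badd (x y : B) : B := (x `\` y) `|` (y `\` x).
Definition Bshift (k : int) (y : B) : B := [fset (i + k)%R | i in y].

Definition L2 := (B * int)%type.
Definition L2mul (g h : L2) : L2 := (Badd g.1 (Bshift g.2 h.1), (g.2 + h.2)%R).
Definition gen_t : L2 := (fset0, 1%R).
Definition gen_at : L2 := ([fset 0%R], 1%R).

Definition adj (g h : L2) : Prop :=
  exists s, (s = gen_t \/ s = gen_at) /\ (h = L2mul g s \/ g = L2mul h s).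

Inductive reach : L2 -> L2 -> nat -> Prop :=
| reach0 g : reach g g 0
| reachS g h k n : reach g h n -> adj h k -> reach g k n.+1.

Definition dist_is (g h : L2) (n : nat) : Prop :=
  reach g h n /\ forall m, reach g h m -> (n <= m)%N.

Definition dist_le (g h : L2) (r : nat) : Prop :=
  exists n, reach g h n /\ (n <= r)%N.

Definition hausdorff_le (X Y : L2 -> Prop) (r : nat) : Prop :=
  (forall x, X x -> exists y, Y y /\ dist_le x y r) /\
  (forall y, Y y -> exists x, X x /\ dist_le y x r).

(* left coset ((x_i),k)<t> = {((x_i),j) | j in Z}, identified with x *)
Definition coset (x : B) : L2 -> Prop := fun g => g.1 = x.

Definition image (f : L2 -> L2) (X : L2 -> Prop) : L2 -> Prop :=
  fun y => exists x, X x /\ f x = y.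

(* (1,0)-quasi-isometry: isometric embedding with 0-dense image *)
Definition isometry10 (Psi : L2 -> L2) : Prop :=
  (forall g h n, dist_is g h n -> dist_is (Psi g) (Psi h) n) /\
  (forall h, exists g, Psi g = h).

Definition coarsely_permutes (Psi : L2 -> L2) (psi : B -> B) : Prop :=
  bijective psi /\
  exists C : nat, forall x : B, hausdorff_le (image Psi (coset x)) (coset (psi x)) C.

Definition parallelogram_preserving (psi : B -> B) : Prop :=
  forall a b c d : B, Badd a c = Badd b d -> Badd (psi a) (psi c) = Badd (psi b) (psi d).

From Pilot Require Import Defs.
From mathcomp Require Import all_boot all_order all_algebra.
From mathcomp Require Import finmap zify.
Set Implicit Arguments. Unset Strict Implicit. Unset Printing Implicit Defensive.
Import GRing.Theory Num.Theory Order.TTheory.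
Local Open Scope fset_scope.
Local Open Scope ring_scope.

(* The vertical line j |-> (x, j) is a bi-infinite geodesic, so its image under
   Psi is a geodesic staying within bounded distance of the coset psi(x)<t>.  Such
   a geodesic never turns: at a turn its two neighbours differ in a single lamp f,
   and translating by e_f shows that the geodesic never crosses level f again, so
   its height stays on one side of f in both directions, contradicting the almost
   linear growth of height along a path that stays near a coset.  Comparing lamps
   far along the line then shows that the geodesic is the coset itself, so
   Psi(x, j) = (psi x, T_x j) with T_x of slope +1 or -1.  The edges
   (x, i) -- (x + e_i, i + 1) and (x, i + 1) -- (x + e_i, i) are mapped to edges
   between the cosets psi(x) and psi(x + e_i); hence T_(x + e_i) = T_x and
   psi(x + e_i) = psi(x) + e_m with m = min(T_x i, T_x (i + 1)).  By induction T_x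
   does not depend on x, so u |-> psi(x + u) + psi(x) does not depend on x either,
   which is the parallelogram property. *)

Lemma in_Badd (x y : B) m : (m \in Badd x y) = (m \in x) (+) (m \in y).
Proof. by rewrite in_fsetU !in_fsetD; case: (m \in x); case: (m \in y). Qed.

Ltac lamp_ext := apply/fsetP => ?; rewrite ?in_Badd ?in_fset0 ?in_fset1;
  repeat match goal with
  | |- context [?a \in ?b] => case: (a \in b)
  | |- context [?a == ?b] => case: (a == b)
  end.

Lemma Badd0 (x : B) : Badd x fset0 = x. Proof. by lamp_ext. Qed.
Lemma BaddA (x y z : B) : Badd x (Badd y z) = Badd (Badd x y) z. Proof. by lamp_ext. Qed.
Lemma BaddKA (x y : B) : Badd x (Badd x y) = y. Proof. by lamp_ext. Qed.
Lemma Baddxx (x : B) : Badd x x = fset0. Proof. by lamp_ext. Qed.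

Lemma Badd_inj (x : B) : injective (Badd x).
Proof. by move=> y z E; rewrite -(BaddKA x y) E BaddKA. Qed.

Lemma Badd_eq0 (x y : B) : Badd x y = fset0 -> x = y.
Proof. by move=> E; rewrite -(BaddKA x y) E Badd0. Qed.

Lemma Badd1_inj (x : B) a b : Badd x [fset a] = Badd x [fset b] -> a = b.
Proof. by move/Badd_inj/fsetP/(_ a); rewrite !in_fset1 eqxx => /esym/eqP. Qed.

Lemma Badd1_neq (x : B) a : Badd x [fset a] != x.
Proof. by apply/eqP => /fsetP/(_ a); rewrite in_Badd in_fset1 eqxx; case: (a \in x). Qed.

Lemma B_ind (P : B -> Prop) :
  P fset0 -> (forall u i, P u -> P (Badd u [fset i])) -> forall u, P u.
Proof.
move=> P0 PS; elim/fset1U_rect=> // i u iNu Pu.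
suff -> : i |` u = Badd u [fset i] by apply: PS.
apply/fsetP => m; rewrite in_fset1U in_Badd in_fset1.
by case: eqVneq => [->|_]; rewrite ?(negbTE iNu) ?addbF.
Qed.

Lemma Bshift0 k : Bshift k fset0 = fset0.
Proof. by apply/fsetP => m; rewrite in_fset0; apply/negbTE/imfsetP => -[i]; rewrite in_fset0. Qed.

Lemma Bshift1 k : Bshift k [fset 0] = [fset k].
Proof.
apply/fsetP => m; rewrite in_fset1; apply/imfsetP/eqP => [[i]|->].
  by rewrite in_fset1 => /eqP -> ->; rewrite add0r.
by exists 0; rewrite ?in_fset1 ?add0r.
Qed.

(* An edge between heights k and k + 1 can only toggle lamp k. *)
Definition edge_lamp (g h : L2) : int := Num.min g.2 h.2.

Definition edge (g h : L2) : Prop :=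
  (h.2 = g.2 + 1 \/ g.2 = h.2 + 1) /\ (h.1 = g.1 \/ h.1 = Badd g.1 [fset edge_lamp g h]).

Lemma minSl (k : int) : Num.min k (k + 1) = k. Proof. lia. Qed.
Lemma minSr (k : int) : Num.min (k + 1) k = k. Proof. lia. Qed.

Lemma adjE g h : adj g h <-> edge g h.
Proof.
case: g h => [x k] [y l]; rewrite /edge /edge_lamp /=; split.
- case=> s [[->|->] [|]]; rewrite /L2mul /= ?Bshift0 ?Bshift1 ?Badd0;
    case=> -> ->; rewrite ?minSl ?minSr.
  + by split; left.
  + by split; [right | left].
  + by split; [left | right].
  + by split; [right | right; rewrite -BaddA Baddxx Badd0].
- case=> -[->|->] [->|->]; rewrite ?minSl ?minSr.
  + by exists gen_t; split; [left | left; rewrite /L2mul /= Bshift0 Badd0].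
  + by exists gen_at; split; [right | left; rewrite /L2mul /= Bshift1].
  + by exists gen_t; split; [left | right; rewrite /L2mul /= Bshift0 Badd0].
  + by exists gen_at; split; [right | right; rewrite /L2mul /= Bshift1 -BaddA Baddxx Badd0].
Qed.

Lemma adj_sym g h : adj g h -> adj h g.
Proof. by case=> s [Hs [E|E]]; exists s; split=> //; [right | left]. Qed.

Lemma adj_height g h : adj g h -> h.2 = g.2 + 1 \/ g.2 = h.2 + 1.
Proof. by case/adjE. Qed.

Lemma adj_lamps g h : adj g h -> h.1 = g.1 \/ h.1 = Badd g.1 [fset edge_lamp g h].
Proof. by case/adjE. Qed.

Lemma adj_lamp_change g h : adj g h -> g.1 != h.1 -> h.1 = Badd g.1 [fset edge_lamp g h].
Proof. by case/adj_lamps => [->|//]; rewrite eqxx. Qed.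

Definition translate (v : B) (g : L2) : L2 := (Badd v g.1, g.2).

Lemma translateK v : involutive (translate v).
Proof. by case=> x k; rewrite /translate /= BaddKA. Qed.

Lemma adj_translate v g h : adj g h -> adj (translate v g) (translate v h).
Proof.
by case/adjE=> Hk [E|E]; apply/adjE; split=> //=; [left | right]; rewrite E // BaddA.
Qed.

Lemma adj_flip g h : adj g h -> adj (translate [fset edge_lamp g h] g) h.
Proof.
case/adjE=> Hk [E|E]; apply/adjE; split=> //=; rewrite E /edge_lamp /=; [right | left];
  by lamp_ext.
Qed.

Lemma adj_twins g h h' : adj g h -> adj g h' -> h.2 = h'.2 -> h != h' ->
  h' = translate [fset edge_lamp g h] h.
Proof.
case: h h' => [y l] [y' l'] /adj_lamps Hh /adj_lamps Hh' /= El; subst l'.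
rewrite /translate /edge_lamp /= in Hh Hh' * => Hne; congr (_, _).
by case: Hh Hh' Hne => -> [->|->]; rewrite ?eqxx // => _; lamp_ext.
Qed.

Lemma reach0_eq g h : reach g h 0 -> g = h.
Proof. by inversion 1. Qed.

Lemma reach_adj g h : adj g h -> reach g h 1.
Proof. exact: reachS (reach0 g). Qed.

Lemma reach_cat g h k n m : reach g h n -> reach h k m -> reach g k (n + m).
Proof.
move=> Rgh Rhk; elim: Rhk Rgh => [h'|h' k' l m' _ IH Ha] Rgh; first by rewrite addn0.
by rewrite addnS; apply: reachS (IH Rgh) Ha.
Qed.

Lemma reach_sym g h n : reach g h n -> reach h g n.
Proof.
elim=> [g'|g' h' k m _ IH Ha]; first exact: reach0.
by rewrite -add1n; apply: reach_cat IH; apply/reach_adj/adj_sym.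
Qed.

Lemma reach_translate v g h n : reach g h n -> reach (translate v g) (translate v h) n.
Proof. by elim=> [g'|g' h' k m _ IH Ha]; [exact: reach0 | apply: reachS IH (adj_translate v Ha)]. Qed.

Lemma reach_height g h n : reach g h n -> `|h.2 - g.2| <= n%:Z.
Proof. by elim=> [g'|g' h' k m _ IH /adj_height]; [rewrite subrr | lia]. Qed.

Lemma reach_lamp g h n m : reach g h n -> m \in Badd g.1 h.1 -> `|g.2 - m| <= n%:Z.
Proof.
elim=> [g'|g' h' k l Rgh IH Ha]; first by rewrite Baddxx in_fset0.
have := reach_height Rgh; have := adj_height Ha.
case: (adj_lamps Ha) => [->|->]; first by move=> _ _ /IH; lia.
rewrite BaddA in_Badd in_fset1 /edge_lamp; case: eqP => [-> + + _|_]; first lia.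
by rewrite addbF => _ _ /IH; lia.
Qed.

Lemma dist_is_sym g h n : dist_is g h n -> dist_is h g n.
Proof. by case=> R Rmin; split=> [|m /reach_sym]; [exact: reach_sym | exact: Rmin]. Qed.

Lemma adj_dist1 g h : adj g h -> dist_is g h 1.
Proof.
move=> Ha; split=> [|[|//] /reach0_eq E]; first exact: reach_adj.
by move: (adj_height Ha); rewrite E; lia.
Qed.

Lemma dist1_adj g h : dist_is g h 1 -> adj g h.
Proof. by case=> R _; inversion R as [|g' h' k n R0 Ha]; rewrite (reach0_eq R0). Qed.

Lemma int_seq_invariant (T : Type) (u : int -> T) (a b : int) : a <= b ->
  (forall l : int, a <= l < b -> u (l + 1) = u l) -> u b = u a.
Proof.
move=> le_ab; have [n {le_ab}->] : exists n : nat, b = a + n%:Z by exists `|b - a|%N; lia.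
elim: n => [|n IH] step; first by rewrite addr0.
rewrite (_ : a + n.+1%:Z = a + n%:Z + 1) ?step; [|lia|lia].
by apply: IH => l Hl; apply: step; lia.
Qed.

Lemma int_seq_const (T : Type) (u : int -> T) :
  (forall l : int, u (l + 1) = u l) -> forall l : int, u l = u 0.
Proof.
move=> step l; case: (lerP 0 l) => Hl; first exact: int_seq_invariant.
by apply/esym/int_seq_invariant; [lia | move=> k _; exact: step].
Qed.

Lemma eq_unit_monotone (u v : int -> int) (i : int) :
  (forall k : int, u (k + 1) = u k + 1) \/ (forall k : int, u k = u (k + 1) + 1) ->
  (forall k : int, v (k + 1) = v k + 1) \/ (forall k : int, v k = v (k + 1) + 1) ->
  u i = v i -> u (i + 1) = v (i + 1) -> forall k : int, u k = v k.
Proof.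
move=> mu mv Ei Ei1.
have step (k : int) : u (k + 1) - v (k + 1) = u k - v k.
  by case: mu mv => Hu [] Hv; have := Hu k; have := Hv k; have := Hu i; have := Hv i; lia.
have const := int_seq_const (u := fun k => u k - v k) step.
by move=> k; have := const k; have := const i; lia.
Qed.

Definition geodesic_line (p : int -> L2) : Prop :=
  forall (j : int) (n : nat), dist_is (p j) (p (j + n%:Z)) n.

Definition near_coset (p : int -> L2) (y : B) (C : nat) : Prop :=
  forall j : int, exists q : L2, q.1 = y /\ dist_le (p j) q C.

Lemma vertical_geodesic (x : B) : geodesic_line (fun j => (x, j)).
Proof.
move=> j n; split=> [|m /reach_height /=]; last lia.
elim: n => [|n IH]; first by rewrite addr0; exact: reach0.
rewrite (_ : j + n.+1%:Z = j + n%:Z + 1); last lia.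
by apply: reachS IH _; apply/adjE; split=> /=; left.
Qed.

Lemma geodesic_line_rev (p : int -> L2) : geodesic_line p -> geodesic_line (fun j => p (- j)).
Proof.
by move=> geo j n; apply: dist_is_sym; have := geo (- (j + n%:Z)) n; rewrite opprD subrK.
Qed.

Section GeodesicLine.

Variable p : int -> L2.
Hypothesis geo : geodesic_line p.
Local Notation h i := (p i).2.

Lemma geodesic_adj (i : int) : adj (p i) (p (i + 1)).
Proof. exact/dist1_adj/geo. Qed.

Lemma geodesic_height_step (i : int) : h (i + 1) = h i + 1 \/ h i = h (i + 1) + 1.
Proof. exact/adj_height/geodesic_adj. Qed.

Lemma geodesic_reach (a b : int) : a <= b -> reach (p a) (p b) `|b - a|%N.
Proof. by move=> le_ab; have [+ _] := geo a `|b - a|%N; rewrite (_ : a + _ = b) //; lia. Qed.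

Lemma geodesic_min (a b : int) m : reach (p a) (p b) m -> b - a <= m%:Z.
Proof.
case: (lerP a b) => [le_ab|]; last lia.
have [_ + ] := geo a `|b - a|%N; rewrite (_ : a + _ = b); last lia.
by move=> Rmin /Rmin; lia.
Qed.

Lemma geodesic_height_lipschitz (a b : int) : `|h b - h a| <= `|b - a|.
Proof.
case: (lerP a b) => [le_ab|/ltW le_ba].
  by have := reach_height (geodesic_reach le_ab); lia.
by have := reach_height (reach_sym (geodesic_reach le_ba)); lia.
Qed.

(* Otherwise translating by e_f the stretch of the line between b and the f-edge
   (or between the f-edge and a) would give a path shorter than the line. *)
Lemma geodesic_flip_far (a b f l : int) : p a = translate [fset f] (p b) -> a < b ->
  b <= l \/ l < a -> edge_lamp (p l) (p (l + 1)) != f.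
Proof.
move=> Eab lt_ab Hl; apply/eqP => El.
have flip := adj_flip (geodesic_adj l); rewrite El in flip.
case: Hl => Hl.
- have := reach_translate [fset f] (geodesic_reach Hl); rewrite -Eab.
  by move/reachS/(_ flip)/geodesic_min; lia.
- have flip' : adj (p l) (translate [fset f] (p (l + 1))).
    by rewrite -[p l](translateK [fset f]); exact: adj_translate.
  have Hl' : l + 1 <= a by lia.
  have := reach_translate [fset f] (geodesic_reach Hl'); rewrite Eab translateK.
  by move/(reach_cat (reach_adj flip'))/geodesic_min; lia.
Qed.

Lemma geodesic_turn (j : int) : h (j - 1) = h (j + 1) ->
  p (j - 1) = translate [fset edge_lamp (p j) (p (j + 1))] (p (j + 1)).
Proof.
move=> Eh; apply: adj_twins (geodesic_adj j) _ (esym Eh) _.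
  by apply: adj_sym; rewrite -{2}(subrK 1 j); exact: geodesic_adj.
apply/eqP => E; have [_ /(_ 0%N)] := geo (j - 1) 2.
by rewrite (_ : j - 1 + 2%:Z = j + 1) -?E; [move/(_ (reach0 _)) | lia].
Qed.

Lemma geodesic_side (f a b : int) : a <= b ->
  (forall l : int, a <= l < b -> edge_lamp (p l) (p (l + 1)) != f) -> (f < h b) = (f < h a).
Proof.
move=> le_ab Hf; apply: (int_seq_invariant (u := fun k => f < h k)) => // l /Hf /eqP.
by have := geodesic_height_step l; rewrite /edge_lamp /=; lia.
Qed.

Lemma geodesic_lamp (m a b : int) : a <= b ->
  (forall l : int, a <= l < b -> edge_lamp (p l) (p (l + 1)) != m) ->
  (m \in (p b).1) = (m \in (p a).1).
Proof.
move=> le_ab Hm; apply: (int_seq_invariant (u := fun k => m \in (p k).1)) => // l /Hm.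
case: (adj_lamps (geodesic_adj l)) => -> //.
by rewrite in_Badd in_fset1 eq_sym => /negbTE ->; rewrite addbF.
Qed.

End GeodesicLine.

Lemma reach_vertical (x : B) (a b : int) : reach (x, a) (x, b) `|b - a|%N.
Proof.
case: (lerP a b) => Hab; first exact: (geodesic_reach (vertical_geodesic x)).
rewrite (_ : `|b - a|%N = `|a - b|%N); last lia.
by apply/reach_sym/(geodesic_reach (vertical_geodesic x)); lia.
Qed.

Section GeodesicNearCoset.

Variables (p : int -> L2) (y : B) (C : nat).
Hypotheses (geo : geodesic_line p) (near : near_coset p y C).
Local Notation h i := (p i).2.

Lemma near_coset_lamp (j m : int) : m \in Badd (p j).1 y -> `|h j - m| <= C%:Z.
Proof. by case: (near j) => q [<- [n [R le_nC]]] /(reach_lamp R); lia. Qed.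

Lemma near_coset_vertical (j : int) : exists2 n, (n <= 2 * C)%N & reach (p j) (y, h j) n.
Proof.
case: (near j) => -[y' k] /= [-> [n [R le_nC]]].
exists (n + `|h j - k|)%N; first by have /= := reach_height R; lia.
exact: reach_cat R (reach_vertical y k (h j)).
Qed.

Lemma near_coset_height (a b : int) : b - a <= `|h b - h a| + 4 * C%:Z.
Proof.
have [na le_na Ra] := near_coset_vertical a.
have [nb le_nb Rb] := near_coset_vertical b.
have := geodesic_min geo (reach_cat (reach_cat Ra (reach_vertical y (h a) (h b))) (reach_sym Rb)).
lia.
Qed.

Lemma geodesic_near_no_turn (j : int) : h (j + 1) - h j = h j - h (j - 1).
Proof.
have := geodesic_height_step geo j; have := geodesic_height_step geo (j - 1); rewrite subrK.
case: (eqVneq (h (j - 1)) (h (j + 1))) => [Eturn step1 step0|]; last lia.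
have far := geodesic_flip_far geo (geodesic_turn geo Eturn).
have [f Ef] : {f | f = edge_lamp (p j) (p (j + 1))} by eexists.
rewrite -Ef in far; rewrite /edge_lamp in Ef.
have [N EN] : {N : nat | N = (4 * C + 1)%N} by eexists.
have side_fwd : (f < h (j + 1 + N%:Z)) = (f < h (j + 1)).
  by apply: (geodesic_side geo) => [|l Hl]; [lia | apply: far; lia].
have side_bwd : (f < h (j - 1)) = (f < h (j - 1 - N%:Z)).
  by apply: (geodesic_side geo) => [|l Hl]; [lia | apply: far; lia].
have := geodesic_height_lipschitz geo (j + 1) (j + 1 + N%:Z).
have := geodesic_height_lipschitz geo (j - 1 - N%:Z) (j - 1).
have := near_coset_height (j - 1 - N%:Z) (j + 1 + N%:Z).
lia.
Qed.

Lemma geodesic_near_monotone :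
  (forall i : int, h (i + 1) = h i + 1) \/ (forall i : int, h i = h (i + 1) + 1).
Proof.
have slope (i : int) : h (i + 1) - h i = h 1 - h 0.
  apply: (int_seq_const (u := fun k => h (k + 1) - h k)) => k.
  by rewrite geodesic_near_no_turn addrK.
case: (geodesic_height_step geo 0); rewrite add0r => step0; [left | right] => i.
all: by have := slope i; lia.
Qed.

Lemma geodesic_near_up_lamps : (forall i : int, h (i + 1) = h i + 1) ->
  forall j : int, (p j).1 = y.
Proof.
move=> up j; apply/Badd_eq0/eqP; apply: contraT => /fset0Pn [m Hm].
have hE (k : int) : h k - k = h j - j.
  suff hk (l : int) : h l - l = h 0 - 0 by rewrite !hk.
  by apply: (int_seq_const (u := fun k => h k - k)) => i; rewrite up; lia.
have lamp_far (k : int) : (m \in (p k).1) = (m \in (p j).1) -> `|h k - m| <= C%:Z.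
  by move=> E; apply: near_coset_lamp; rewrite in_Badd E -in_Badd.
case: (ltrP m (h j)) => Hmj.
- have E : (m \in (p (j + C%:Z + 1)).1) = (m \in (p j).1).
    apply: (geodesic_lamp geo) => [|l Hl]; first lia.
    by apply/eqP; rewrite /edge_lamp; have := hE l; have := hE (l + 1); lia.
  by have := lamp_far _ E; have := hE (j + C%:Z + 1); lia.
- have E : (m \in (p j).1) = (m \in (p (j - C%:Z - 1)).1).
    apply: (geodesic_lamp geo) => [|l Hl]; first lia.
    by apply/eqP; rewrite /edge_lamp; have := hE l; have := hE (l + 1); lia.
  by have := lamp_far _ (esym E); have := hE (j - C%:Z - 1); lia.
Qed.

End GeodesicNearCoset.

Lemma geodesic_near_coset (p : int -> L2) (y : B) (C : nat) :
  geodesic_line p -> near_coset p y C -> forall j : int, (p j).1 = y.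
Proof.
move=> geo near; case: (geodesic_near_monotone geo near) => [up|down].
  exact: geodesic_near_up_lamps geo near up.
move=> j; rewrite -[j]opprK.
apply: (geodesic_near_up_lamps (geodesic_line_rev geo) (fun j => near (- j))) => i /=.
by rewrite down opprD subrK.
Qed.

Section CosetPermutingIsometry.

Variables (Psi : L2 -> L2) (psi : B -> B) (C : nat).
Hypothesis Psi_dist : forall g h n, dist_is g h n -> dist_is (Psi g) (Psi h) n.
Hypothesis psi_inj : injective psi.
Hypothesis Psi_cosets : forall x : B, hausdorff_le (Defs.image Psi (coset x)) (coset (psi x)) C.
Local Notation T x j := (Psi (x, (j : int))).2.

Lemma Psi_adj g h : adj g h -> adj (Psi g) (Psi h).
Proof. by move/adj_dist1/Psi_dist/dist1_adj. Qed.

Lemma Psi_vertical_geodesic (x : B) : geodesic_line (fun j => Psi (x, j)).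
Proof. by move=> j n; apply: Psi_dist; exact: vertical_geodesic. Qed.

Lemma Psi_vertical_near (x : B) : near_coset (fun j => Psi (x, j)) (psi x) C.
Proof. by move=> j; case: (Psi_cosets x) => + _; apply; exists (x, j). Qed.

Lemma Psi_lamps (x : B) (j : int) : (Psi (x, j)).1 = psi x.
Proof. exact: geodesic_near_coset (Psi_vertical_geodesic x) (Psi_vertical_near x) j. Qed.

Lemma Psi_height_monotone (x : B) :
  (forall i : int, T x (i + 1) = T x i + 1) \/ (forall i : int, T x i = T x (i + 1) + 1).
Proof. exact: geodesic_near_monotone (Psi_vertical_geodesic x) (Psi_vertical_near x). Qed.

Lemma Psi_cross_edge (x x' : B) (j j' : int) : adj (x, j) (x', j') -> x != x' ->
  psi x' = Badd (psi x) [fset Num.min (T x j) (T x' j')] /\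
  (T x' j' = T x j + 1 \/ T x j = T x' j' + 1).
Proof.
move=> /Psi_adj Ha neq; split; last exact: adj_height Ha.
have := adj_lamp_change Ha; rewrite !Psi_lamps; apply.
by rewrite (inj_eq psi_inj).
Qed.

Lemma Psi_flip (x : B) (i : int) :
  (forall j : int, T (Badd x [fset i]) j = T x j) /\
  psi (Badd x [fset i]) = Badd (psi x) [fset Num.min (T x i) (T x (i + 1))].
Proof.
have := Badd1_neq x i; rewrite eq_sym; set x' := Badd x [fset i] => neq.
have [E1 H1] : psi x' = Badd (psi x) [fset Num.min (T x i) (T x' (i + 1))] /\
    (T x' (i + 1) = T x i + 1 \/ T x i = T x' (i + 1) + 1).
  by apply: Psi_cross_edge neq; apply/adjE; split; [left | right; rewrite /edge_lamp /= minSl].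
have [E2 H2] : psi x' = Badd (psi x) [fset Num.min (T x (i + 1)) (T x' i)] /\
    (T x' i = T x (i + 1) + 1 \/ T x (i + 1) = T x' i + 1).
  by apply: Psi_cross_edge neq; apply/adjE; split; [right | right; rewrite /edge_lamp /= minSr].
have Emin := Badd1_inj (etrans (esym E1) E2).
have /= step := geodesic_height_step (Psi_vertical_geodesic x) i.
have /= step' := geodesic_height_step (Psi_vertical_geodesic x') i.
have Ei : T x' i = T x i by lia.
have Ei1 : T x' (i + 1) = T x (i + 1) by lia.
split; last by rewrite E1 Ei1.
exact: eq_unit_monotone (Psi_height_monotone x') (Psi_height_monotone x) Ei Ei1.
Qed.

Lemma Psi_height_invariant (x : B) (j : int) : T x j = T fset0 j.
Proof. by elim/B_ind: x j => // x i IH j; rewrite (proj1 (Psi_flip x i)). Qed.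

Lemma psi_flip (x : B) (i : int) :
  psi (Badd x [fset i]) = Badd (psi x) [fset Num.min (T fset0 i) (T fset0 (i + 1))].
Proof. by rewrite (proj2 (Psi_flip x i)) !Psi_height_invariant. Qed.

Lemma psi_Badd (x u : B) : Badd (psi x) (psi (Badd x u)) = Badd (psi fset0) (psi u).
Proof.
elim/B_ind: u x => [x|u i IH x]; first by rewrite Badd0 !Baddxx.
by rewrite BaddA psi_flip BaddA IH -BaddA -psi_flip.
Qed.

Lemma psi_parallelogram : parallelogram_preserving psi.
Proof.
have key (x y : B) : Badd (psi x) (psi y) = Badd (psi fset0) (psi (Badd x y)).
  by rewrite -(psi_Badd x) BaddKA.
by move=> a b c d E; rewrite key [RHS]key E.
Qed.

End CosetPermutingIsometry.

Theorem proposition4p2 (Psi : L2 -> L2) (psi : B -> B) :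
  isometry10 Psi -> coarsely_permutes Psi psi -> parallelogram_preserving psi.
Proof.
move=> [Psi_dist _] [/bij_inj psi_inj [C Psi_cosets]].
exact: psi_parallelogram Psi_dist psi_inj Psi_cosets.
Qed.
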